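(* Consider a secure index coding problem $(W_i\mid A_i,P_i)$, $i\in[m]$, on $n$ messages, a securely achievable symmetric rate $R$, and a set function $g:2^{[n]}\to\mathbb R$ satisfying conditions (G1)–(G6) of the context with $R_i=R$ for all $i$. Let $L_1,L_2,\ldots,L_k\subseteq[n]$ be such that for every $j\in[k-1]$ either $L_j - L_{j+1}$ or $L_j\subseteq L_{j+1}$. Then $$g(L_k)\ge g(L_1)+R\cdot\sum_{\ell\in[k-1]}h(L_\ell,L_{\ell+1}).$$
   Context: Secure index coding: $n$ independent uniformly distributed messages $X_i\in\{0,1\}^{t_i}$; $m$ parties, party $i$ with side information $A_i\subseteq[n]$, requested set $W_i\subseteq[n]\setminus A_i$ (possibly empty), interfering set $B_i=[n]\setminus(A_i\cup W_i)$, prohibited set $P_i\subseteq B_i$. A $(\mathbf t,M)$ secure index code is a deterministic surjective encoder $Y=\phi(X_{[n]})\in\{1,\ldots,M\}$ with $H(X_{W_i}\mid Y,X_{A_i})=0$ for all $i$ and $I(X_j;Y\mid X_{A_i})=0$ for all $j\in P_i$; rates $R_i=t_i/\log M$. Standing assumption: the problem is feasible (its symmetric secure capacity is positive). Conditions on $g$: (G1) $\sum_{i\in W}R_i=g(B\cup W)-g(B)=g(W)$ for all $i\in[m]$, $W\subseteq W_i$, $B\subseteq (B_i\cup W_i)\setminus W$; (G2) $g(\emptyset)=0$; (G3) $g([n])\le1$; (G4) $g(S)\le g(S')$ whenever $S\subseteq S'$; (G5) $g(S\cap S')+g(S\cup S')\le g(S)+g(S')$; (G6) $g(B_i)=g(B_i\setminus\{j\})$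 for all $j\in P_i$, $i\in[m]$. Relation $S - S'$: for each $i$ with $P_i\ne\emptyset$ and $T\subseteq[n]\setminus B_i$, $N(i,T)=\{T\cup B_i\setminus\{j\}:j\in P_i\}\cup\{T\cup B_i\}$; repeatedly merge intersecting such families until pairwise disjoint; $S - S'$ iff $S,S'$ lie in the same resulting family. Acyclic sets: $K\subseteq[n]\setminus S$ is acyclic w.r.t. $S$ if it can be ordered $K=\{k_1,\ldots,k_r\}$ so that for each $\ell$ some party $j_\ell$ has $k_\ell\in W_{j_\ell}$ and $S\cup\{k_1,\ldots,k_\ell\}\subseteq B_{j_\ell}\cup W_{j_\ell}$. For $S\subseteq S'$, $h_{\rm MAIS}(S,S')=\max\{|K|:K\subseteq S'\setminus S\text{ acyclic w.r.t. }S\}$. For any $S,S'\subseteq[n]$, $h(S,S')=h_{\rm MAIS}(S,S')$ if $S\subseteq S'$ and $h(S,S')=0$ otherwise. *)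

From HB Require Import structures.
From mathcomp Require Import all_boot all_order all_algebra.
From mathcomp Require Import reals exp.
From Stdlib Require Import Relations.
Set Implicit Arguments. Unset Strict Implicit. Unset Printing Implicit Defensive.
Import Order.TTheory GRing.Theory Num.Theory.
Local Open Scope ring_scope.

(* An index coding problem on n messages and m parties is given by
   A W P : 'I_m -> {set 'I_n}. Messages/parties are indexed from 0. *)

Definition Bset (n m : nat) (A W : 'I_m -> {set 'I_n}) (i : 'I_m) : {set 'I_n} :=
  ~: (A i :|: W i).

Definition sic_problem (n m : nat) (A W P : 'I_m -> {set 'I_n}) : Prop :=
  forall i, W i \subset ~: A i /\ P i \subset Bset A W i.

(* A message tuple: X_i in {0,1}^{t_i}, encoded as an element of 'I_(2^t_i). *)
Definition msgs (n : nat) (t : 'I_n -> nat) := {dffun forall k : 'I_n, 'I_(2 ^ t k)}.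

(* Y = phi(X) in {0,..,M-1} (i.e. M values), phi deterministic and surjective;
   decodability  H(X_{W_i} | Y, X_{A_i}) = 0  and security
   I(X_j ; Y | X_{A_i}) = 0 (j in P_i), the latter written for independent
   uniform messages as: the number of message tuples with given X_{A_i},
   given X_j = b and given Y = y does not depend on b. *)
Definition secure_index_code (n m : nat) (A W P : 'I_m -> {set 'I_n})
    (t : 'I_n -> nat) (M : nat) (phi : msgs t -> 'I_M) : Prop :=
  (forall y : 'I_M, exists x, phi x = y) /\
  (forall (i : 'I_m) (x x' : msgs t), phi x = phi x' ->
      (forall a, a \in A i -> x a = x' a) ->
      forall w, w \in W i -> x w = x' w) /\
  (forall (i : 'I_m) (j : 'I_n), j \in P i ->
     forall (x0 : msgs t) (y : 'I_M) (b b' : 'I_(2 ^ t j)),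
       #|[set x : msgs t | [forall a in A i, x a == x0 a] && (x j == b) && (phi x == y)]|
     = #|[set x : msgs t | [forall a in A i, x a == x0 a] && (x j == b') && (phi x == y)]|).

Definition log2 (K : realType) (x : K) : K := ln x / ln 2.

Definition sym_securely_achievable (K : realType) (n m : nat)
    (A W P : 'I_m -> {set 'I_n}) (r : K) : Prop :=
  exists (t : 'I_n -> nat) (M : nat) (phi : msgs t -> 'I_M),
    (1 < M)%N /\ secure_index_code A W P phi /\
    forall k : 'I_n, (t k)%:R / log2 (M%:R : K) = r.

(* standing assumption: symmetric secure capacity is positive *)
Definition sic_feasible (K : realType) (n m : nat) (A W P : 'I_m -> {set 'I_n}) : Prop :=
  exists r : K, 0 < r /\ sym_securely_achievable A W P r.

Definition G_conditions (K : realType) (n m : nat) (A W P : 'I_m -> {set 'I_n})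
    (r : K) (g : {set 'I_n} -> K) : Prop :=
  (forall (i : 'I_m) (V Bs : {set 'I_n}), V \subset W i ->
      Bs \subset (Bset A W i :|: W i) :\: V ->
      \sum_(k in V) r = g (Bs :|: V) - g Bs /\ g (Bs :|: V) - g Bs = g V) /\
  g set0 = 0 /\
  g setT <= 1 /\
  (forall S S' : {set 'I_n}, S \subset S' -> g S <= g S') /\
  (forall S S' : {set 'I_n}, g (S :&: S') + g (S :|: S') <= g S + g S') /\
  (forall (i : 'I_m) (j : 'I_n), j \in P i ->
              g (Bset A W i) = g (Bset A W i :\ j)).

Definition Nfam (n m : nat) (A W P : 'I_m -> {set 'I_n}) (i : 'I_m) (T : {set 'I_n})
    : {set {set 'I_n}} :=
  [set (T :|: Bset A W i) :\ j | j in P i] :|: [set T :|: Bset A W i].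

Definition Nrel (n m : nat) (A W P : 'I_m -> {set 'I_n}) (S S' : {set 'I_n}) : Prop :=
  exists (i : 'I_m) (T : {set 'I_n}),
    P i != set0 /\ T \subset ~: Bset A W i /\
    S \in Nfam A W P i T /\ S' \in Nfam A W P i T.

(* merging intersecting families until pairwise disjoint: S - S' iff S and S'
   are connected through a chain of basic families *)
Definition dash (n m : nat) (A W P : 'I_m -> {set 'I_n}) (S S' : {set 'I_n}) : Prop :=
  clos_trans _ (Nrel A W P) S S'.

Definition acyclic (n m : nat) (A W : 'I_m -> {set 'I_n}) (S Kset : {set 'I_n}) : bool :=
  (Kset \subset ~: S) &&
  [exists f : {ffun 'I_#|Kset| -> 'I_n},
     [&& injectiveb f, [forall l, f l \in Kset] &
        [forall l, [exists j : 'I_m,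
           (f l \in W j) &&
           (S :|: [set f l' | l' in [set l'' : 'I_#|Kset| | (l'' <= l)%N]]
              \subset Bset A W j :|: W j)]]]].

Definition hMAIS (n m : nat) (A W : 'I_m -> {set 'I_n}) (S S' : {set 'I_n}) : nat :=
  \max_(Kset : {set 'I_n} | (Kset \subset S' :\: S) && acyclic A W S Kset) #|Kset|.

Definition hfun (n m : nat) (A W : 'I_m -> {set 'I_n}) (S S' : {set 'I_n}) : nat :=
  if S \subset S' then hMAIS A W S S' else 0%N.

From HB Require Import structures.
From mathcomp Require Import all_boot all_order all_algebra.
From mathcomp Require Import reals exp.
From mathcomp Require Import lra.
Set Implicit Arguments.
Unset Strict Implicit.
Unset Printing Implicit Defensive.
Import Order.TTheory GRing.Theory Num.Theory.
Local Open Scope ring_scope.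

(* Each link of the chain gains at least r * h(L_l, L_(l+1)), and the gains
   telescope.  Along an inclusion S <= S', adding the elements of a maximum
   acyclic set in their acyclic order raises g by exactly r at each step (G1),
   and monotonicity (G4) covers the rest of S'.  Along S - S', g is constant:
   by (G6) removing a prohibited j from B_i does not lower g, so by
   submodularity (G5) it does not lower g on any superset of B_i either, and
   every member of N(i,T) is such a superset with at most one j removed. *)

Lemma ler_add_sum_chain (R : numDomainType) (a c : nat -> R) (i k : nat) :
  (i <= k)%N -> (forall l, (i <= l < k)%N -> a l + c l <= a l.+1) ->
  a i + \sum_(i <= l < k) c l <= a k.
Proof.
elim: k => [|k IHk]; first by rewrite leqn0 => /eqP->; rewrite big_geq ?addr0.
rewrite leq_eqVlt => /orP[/eqP->|lt_ik] step; first by rewrite big_geq ?addr0.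
rewrite big_nat_recr //= addrA.
have le_ak : a i + \sum_(i <= l < k) c l <= a k.
  by apply: IHk => // l /andP[il lk]; apply: step; rewrite il ltnW.
apply: le_trans (step k _); first by rewrite lerD2r.
by rewrite ltnSn andbT -ltnS.
Qed.

Section GConditions.

Variables (K : realType) (n m : nat) (A W P : 'I_m -> {set 'I_n}).
Variables (r : K) (g : {set 'I_n} -> K).
Hypothesis gG : G_conditions A W P r g.

Lemma g_mono (S S' : {set 'I_n}) : S \subset S' -> g S <= g S'.
Proof. by case: gG => _ [_ [_ [G4 _]]]; apply: G4. Qed.

Lemma g_submod (S S' : {set 'I_n}) : g (S :&: S') + g (S :|: S') <= g S + g S'.
Proof. by case: gG => _ [_ [_ [_ [G5 _]]]]; apply: G5. Qed.

Lemma g_add_requested (i : 'I_m) (x : 'I_n) (S : {set 'I_n}) :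
  x \in W i -> S \subset Bset A W i :|: W i -> x \notin S -> g (x |: S) = g S + r.
Proof.
move=> xW SBW xS; case: gG => G1 _.
have x_W : [set x] \subset W i by rewrite sub1set.
have S_BW : S \subset (Bset A W i :|: W i) :\ x by rewrite subsetD1 SBW.
have [gain _] := G1 i _ _ x_W S_BW.
by rewrite big_set1 setUC in gain; rewrite gain addrC subrK.
Qed.

Section AcyclicOrdering.

Variables (S : {set 'I_n}) (d : nat) (f : 'I_d -> 'I_n).
Hypotheses (f_inj : injective f) (f_notin : forall l, f l \notin S).
Hypothesis f_requested : forall l : 'I_d, exists2 j, f l \in W j &
  S :|: f @: [set l' : 'I_d | (l' <= l)%N] \subset Bset A W j :|: W j.

Definition ordered_prefix (p : nat) : {set 'I_n} := S :|: f @: [set l : 'I_d | (l < p)%N].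

Lemma ordered_prefixS (l : 'I_d) : ordered_prefix l.+1 = f l |: ordered_prefix l.
Proof.
rewrite /ordered_prefix.
have -> : [set l' : 'I_d | (l' < l.+1)%N] = l |: [set l' : 'I_d | (l' < l)%N].
  by apply/setP => l'; rewrite !inE ltnS leq_eqVlt.
by rewrite imsetU1 setUCA.
Qed.

Lemma g_ordered_prefix (p : nat) : (p <= d)%N -> g (ordered_prefix p) = g S + r * p%:R.
Proof.
elim: p => [|p IHp] p_le_d.
  rewrite /ordered_prefix.
  have -> : [set l : 'I_d | (l < 0)%N] = set0 by apply/setP => l; rewrite !inE.
  by rewrite imset0 setU0 mulr0 addr0.
have [j flW prefix_BW] := f_requested (Ordinal p_le_d).
rewrite (ordered_prefixS (Ordinal p_le_d)) (g_add_requested flW).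
- by rewrite IHp ?(ltnW p_le_d) // -addn1 natrD mulrDr mulr1 addrA.
- apply: subset_trans prefix_BW; rewrite setUS // imsetS //.
  by apply/subsetP => l; rewrite !inE => /ltnW.
- by rewrite /ordered_prefix in_setU (negbTE (f_notin _)) mem_imset // inE ltnn.
Qed.

End AcyclicOrdering.

Lemma acyclic_gain (S S' Kset : {set 'I_n}) :
  S \subset S' -> Kset \subset S' :\: S -> acyclic A W S Kset ->
  g S + r * #|Kset|%:R <= g S'.
Proof.
move=> SS' KS' /andP[KnS /existsP[f]].
case/and3P=> /injectiveP f_inj /forallP fK /forallP f_req.
have f_notin l : f l \notin S by have := subsetP KnS _ (fK l); rewrite inE.
have f_requested l : exists2 j, f l \in W j &
    S :|: f @: [set l' : 'I_#|Kset| | (l' <= l)%N] \subset Bset A W j :|: W j.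
  by have [j /andP[]] := existsP (f_req l); exists j.
rewrite -(g_ordered_prefix f_inj f_notin f_requested (leqnn #|Kset|)); apply: g_mono.
rewrite subUset SS'; apply/subsetP => _ /imsetP[l _ ->].
by have := subsetP KS' _ (fK l); rewrite inE => /andP[].
Qed.

Lemma hMAIS_gain (S S' : {set 'I_n}) :
  S \subset S' -> g S + r * (hMAIS A W S S')%:R <= g S'.
Proof.
move=> SS'; rewrite /hMAIS.
set admissible := fun Kset : {set 'I_n} => (Kset \subset S' :\: S) && acyclic A W S Kset.
case: (pickP admissible) => [K0 K0_ok | none]; last first.
  by rewrite big_pred0 // mulr0 addr0 g_mono.
rewrite (bigop.bigmax_eq_arg K0) //.
by case: arg_maxnP => // K1 /andP[K1S' K1acyc] _; apply: acyclic_gain.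
Qed.

Lemma g_setD1_super (B C : {set 'I_n}) (j : 'I_n) :
  B \subset C -> j \in B -> g (B :\ j) = g B -> g (C :\ j) = g C.
Proof.
move=> BC jB gBj; apply/eqP; rewrite eq_le g_mono ?subsetDl //=.
have := g_submod B (C :\ j); rewrite setIDA (setIidPl BC).
have -> : B :|: C :\ j = C.
  apply/setP => x; rewrite !inE; have := subsetP BC x.
  by case: (x =P j) => [->|_]; rewrite ?jB ?(subsetP BC j jB) //=; case: (x \in B) => // ->.
rewrite gBj; lra.
Qed.

Hypothesis problem : sic_problem A W P.

Lemma g_Nfam (i : 'I_m) (T S : {set 'I_n}) :
  S \in Nfam A W P i T -> g S = g (T :|: Bset A W i).
Proof.
rewrite /Nfam in_setU in_set1 => /orP[/imsetP[j jP ->]|/eqP -> //].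
have jB : j \in Bset A W i by have [_ /subsetP] := problem i; apply.
apply: g_setD1_super (subsetUr _ _) jB _.
by case: gG => _ [_ [_ [_ [_ G6]]]]; rewrite -G6.
Qed.

Lemma g_dash (S S' : {set 'I_n}) : dash A W P S S' -> g S = g S'.
Proof.
elim=> [X Y [i [T [_ [_ [XN YN]]]]] | X Y Z _ gXY _ gYZ].
  by rewrite (g_Nfam XN) (g_Nfam YN).
by rewrite gXY gYZ.
Qed.

Lemma g_chain_link (S S' : {set 'I_n}) :
  dash A W P S S' \/ S \subset S' -> g S + r * (hfun A W S S')%:R <= g S'.
Proof.
rewrite /hfun; case: ifPn => [SS' _ | SnS' [SdS'|SS']].
- exact: hMAIS_gain.
- by rewrite mulr0 addr0 (g_dash SdS').
- by case/negP: SnS'.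
Qed.

End GConditions.

Theorem lemma3 (K : realType) (n m : nat) (A W P : 'I_m -> {set 'I_n})
    (r : K) (g : {set 'I_n} -> K) (k : nat) (L : nat -> {set 'I_n}) :
  sic_problem A W P ->
  sic_feasible K A W P ->
  sym_securely_achievable A W P r ->
  G_conditions A W P r g ->
  (0 < k)%N ->
  (forall j : nat, (1 <= j)%N -> (j < k)%N ->
     dash A W P (L j) (L j.+1) \/ L j \subset L j.+1) ->
  g (L 1%N) + r * (\sum_(1 <= l < k) hfun A W (L l) (L l.+1))%:R <= g (L k).
Proof.
move=> problem _ _ gG k_gt0 links; rewrite natr_sum mulr_sumr.
apply: (@ler_add_sum_chain _ (fun l => g (L l)) _ 1 k k_gt0) => l /andP[l_ge1 l_lt_k].
exact: (g_chain_link gG problem (links l l_ge1 l_lt_k)).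
Qed.
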